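(* Let $K\subset\{(x,y)\in\mathbb{R}^2:0<x\le y\}$ be compact, $E=\{\xi\in\mathbb{R}^{2\times2}:(\lambda_1(\xi),\lambda_2(\xi))\in K\}$, and let $\xi\in\operatorname{int}E^{rc}$. Then there exists an in-approximation $(U_n)_{n\ge1}$ of $E$ such that $\xi\in U_1$.
   Context: $\lambda_1(\xi)\le\lambda_2(\xi)$ are the singular values of $\xi\in\mathbb{R}^{2\times2}$ (eigenvalues of $\sqrt{\xi\xi^t}$). For compact $C$, $C^{rc}=\{\xi: f(\xi)\le0$ for every rank one convex $f:\mathbb{R}^{2\times2}\to\mathbb{R}$ with $f|_C\le0\}$; for open $U$, $U^{rc}=\bigcup_{C\subset U\text{ compact}}C^{rc}$. A function is rank one convex if it is convex along every segment $[\xi,\eta]$ with $\operatorname{rank}(\xi-\eta)=1$. A sequence of open sets $U_i$ is an in-approximation of a compact set $E$ if $U_i\subseteq U_{i+1}^{rc}$ for all $i$ and $\sup_{\eta\in U_i}\operatorname{dist}(\eta,E)\to0$ as $i\to\infty$. *)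

From Stdlib Require Import Reals.
Open Scope R_scope.

Record M2 := mkM2 { a11 : R; a12 : R; a21 : R; a22 : R }.

Definition madd (x y : M2) : M2 :=
  mkM2 (a11 x + a11 y) (a12 x + a12 y) (a21 x + a21 y) (a22 x + a22 y).
Definition mscale (t : R) (x : M2) : M2 :=
  mkM2 (t * a11 x) (t * a12 x) (t * a21 x) (t * a22 x).
Definition msub (x y : M2) : M2 := madd x (mscale (-1) y).
Definition mzero : M2 := mkM2 0 0 0 0.

Definition mdet (x : M2) : R := a11 x * a22 x - a12 x * a21 x.
Definition mnorm2 (x : M2) : R :=
  a11 x ^ 2 + a12 x ^ 2 + a21 x ^ 2 + a22 x ^ 2.
Definition mdist (x y : M2) : R := sqrt (mnorm2 (msub x y)).

(* Singular values: l1 <= l2 are the eigenvalues of sqrt(x x^t), i.e.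
   nonnegative numbers whose squares are the eigenvalues (with multiplicity)
   of the symmetric 2x2 matrix x x^t, i.e. l1^2 + l2^2 = tr(x x^t) = |x|^2
   and l1^2 l2^2 = det(x x^t) = (det x)^2. *)
Definition singvals (x : M2) (l1 l2 : R) : Prop :=
  0 <= l1 /\ l1 <= l2 /\
  l1 ^ 2 + l2 ^ 2 = mnorm2 x /\ l1 * l2 = Rabs (mdet x).

Definition mopen (U : M2 -> Prop) : Prop :=
  forall x, U x -> exists e, 0 < e /\ forall y, mdist x y < e -> U y.
Definition mclosed (C : M2 -> Prop) : Prop :=
  mopen (fun x => ~ C x).
Definition mbounded (C : M2 -> Prop) : Prop :=
  exists M, forall x, C x -> mnorm2 x <= M.
(* compact = closed and bounded (Heine-Borel in R^4) *)
Definition mcompact (C : M2 -> Prop) : Prop := mclosed C /\ mbounded C.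
Definition minterior (S : M2 -> Prop) (x : M2) : Prop :=
  exists e, 0 < e /\ forall y, mdist x y < e -> S y.

Definition dist2 (p q : R * R) : R :=
  sqrt ((fst p - fst q) ^ 2 + (snd p - snd q) ^ 2).
Definition open2 (U : R * R -> Prop) : Prop :=
  forall p, U p -> exists e, 0 < e /\ forall q, dist2 p q < e -> U q.
Definition compact2 (K : R * R -> Prop) : Prop :=
  open2 (fun p => ~ K p) /\
  exists M, forall p, K p -> fst p ^ 2 + snd p ^ 2 <= M.

Definition rank_one (x : M2) : Prop := x <> mzero /\ mdet x = 0.

Definition rank_one_convex (f : M2 -> R) : Prop :=
  forall x y, rank_one (msub x y) ->
  forall t, 0 <= t <= 1 ->
    f (madd (mscale t x) (mscale (1 - t) y)) <= t * f x + (1 - t) * f y.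

Definition rc_hull_compact (C : M2 -> Prop) (x : M2) : Prop :=
  forall f, rank_one_convex f -> (forall c, C c -> f c <= 0) -> f x <= 0.

Definition rc_hull_open (U : M2 -> Prop) (x : M2) : Prop :=
  exists C, mcompact C /\ (forall c, C c -> U c) /\ rc_hull_compact C x.

Definition in_approximation (U : nat -> M2 -> Prop) (E : M2 -> Prop) : Prop :=
  (forall i, mopen (U i)) /\
  (forall i x, U i x -> rc_hull_open (U (S i)) x) /\
  (forall eps, 0 < eps -> exists N, forall i, (N <= i)%nat ->
     forall eta, U i eta -> exists e, E e /\ mdist eta e < eps).

(* Write x as a conformal matrix of modulus rho plus an anticonformal one of
   modulus omega; then lambda_2 = rho + omega and lambda_1 = |rho - omega|, and in the
   frame given by the two phases x = diag(rho + omega, rho - omega).  Both singular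
   values are 1-Lipschitz, and within a fixed frame varying one diagonal entry is a
   rank-one move.  Hence a matrix whose singular values are at most (l1, l2), with
   (l1, l2) in K, is a rank-one laminate of the four matrices diag(+-l2, +-l1) of
   its frame, which lie in E.
   Take U_(n+1) to be the union of the balls of radius (1 - t) l1 around t c, with
   c in E of singular values (l1, l2) and 1 - 1/(n+2) < t < 1.  Its points have
   singular values strictly below those of c, so they lie in (t' E)^rc for some t'
   closer to 1, and t' E is a compact subset of U_(n+2); its points are within
   O(1/n) of E.  Finally U_0 is a small ball around xi: since (t E)^rc = t E^rc, it
   lies in (t E)^rc for t close to 1. *)

From Stdlib Require Import Reals Lra Psatz Lia.
Open Scope R_scope.

Lemma sqrt_le_of_le_sq (X Y : R) : 0 <= Y -> X <= Y ^ 2 -> sqrt X <= Y.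
Proof. intros HY H. rewrite <- (sqrt_pow2 Y HY). now apply sqrt_le_1_alt. Qed.

Lemma le_sqrt_of_sq_le (X Y : R) : Y ^ 2 <= X -> Y <= sqrt X.
Proof.
  intros H. destruct (Rle_dec 0 Y) as [HY|HY].
  - rewrite <- (sqrt_pow2 Y HY). now apply sqrt_le_1_alt.
  - pose proof (sqrt_positivity X ltac:(nra)). lra.
Qed.

Lemma sum_sq2_ge0 (a b : R) : 0 <= a ^ 2 + b ^ 2.
Proof. apply Rplus_le_le_0_compat; apply pow2_ge_0. Qed.

Lemma sqrt_sum_sq4_triangle (p1 p2 p3 p4 q1 q2 q3 q4 : R) :
  sqrt ((p1+q1)^2 + (p2+q2)^2 + (p3+q3)^2 + (p4+q4)^2) <=
  sqrt (p1^2+p2^2+p3^2+p4^2) + sqrt (q1^2+q2^2+q3^2+q4^2).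
Proof.
  set (P := p1^2+p2^2+p3^2+p4^2). set (Q := q1^2+q2^2+q3^2+q4^2).
  set (pq := p1*q1+p2*q2+p3*q3+p4*q4).
  assert (HP : 0 <= P) by (unfold P; nra). assert (HQ : 0 <= Q) by (unfold Q; nra).
  pose proof (sqrt_positivity P HP). pose proof (sqrt_positivity Q HQ).
  assert (Cauchy_Schwarz : pq <= sqrt P * sqrt Q).
  { rewrite <- sqrt_mult by assumption. apply le_sqrt_of_sq_le.
    (* Lagrange's identity *)
    assert (P*Q - pq^2 =
      (p1*q2-p2*q1)^2+(p1*q3-p3*q1)^2+(p1*q4-p4*q1)^2+(p2*q3-p3*q2)^2
      +(p2*q4-p4*q2)^2+(p3*q4-p4*q3)^2) by (unfold P, Q, pq; ring).
    assert (0 <= (p1*q2-p2*q1)^2+(p1*q3-p3*q1)^2+(p1*q4-p4*q1)^2+(p2*q3-p3*q2)^2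
      +(p2*q4-p4*q2)^2+(p3*q4-p4*q3)^2)
      by (repeat apply Rplus_le_le_0_compat; apply pow2_ge_0).
    lra. }
  apply sqrt_le_of_le_sq; [lra|].
  replace ((sqrt P + sqrt Q)^2) with (sqrt P ^2 + sqrt Q ^2 + 2 * (sqrt P * sqrt Q)) by ring.
  rewrite !pow2_sqrt by assumption.
  replace ((p1+q1)^2 + (p2+q2)^2 + (p3+q3)^2 + (p4+q4)^2) with (P + Q + 2 * pq)
    by (unfold P, Q, pq; ring).
  lra.
Qed.

Lemma sqrt_sum_sq2_reverse_triangle (a b c d : R) :
  Rabs (sqrt (a^2+b^2) - sqrt (c^2+d^2)) <= sqrt ((a-c)^2 + (b-d)^2).
Proof.
  assert (triangle : forall p1 p2 q1 q2,
    sqrt ((p1+q1)^2 + (p2+q2)^2) <= sqrt (p1^2+p2^2) + sqrt (q1^2+q2^2)).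
  { intros. pose proof (sqrt_sum_sq4_triangle p1 p2 0 0 q1 q2 0 0) as H.
    replace ((0+0)^2) with 0 in H by ring. replace (0^2) with 0 in H by ring.
    now rewrite !Rplus_0_r in H. }
  pose proof (triangle (a-c) (b-d) c d) as H1.
  pose proof (triangle (c-a) (d-b) a b) as H2.
  replace (a-c+c) with a in H1 by ring. replace (b-d+d) with b in H1 by ring.
  replace (c-a+a) with c in H2 by ring. replace (d-b+b) with d in H2 by ring.
  replace ((c-a)^2+(d-b)^2) with ((a-c)^2+(b-d)^2) in H2 by ring.
  apply Rabs_le; lra.
Qed.

Lemma dist2_le_abs_sum (p q : R * R) :
  dist2 p q <= Rabs (fst p - fst q) + Rabs (snd p - snd q).
Proof.
  unfold dist2. pose proof (Rabs_pos (fst p - fst q)). pose proof (Rabs_pos (snd p - snd q)).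
  apply sqrt_le_of_le_sq; [lra|].
  rewrite <- (pow2_abs (fst p - fst q)), <- (pow2_abs (snd p - snd q)). nra.
Qed.

Lemma mnorm2_ge0 x : 0 <= mnorm2 x.
Proof. unfold mnorm2. repeat apply Rplus_le_le_0_compat; apply pow2_ge_0. Qed.

Lemma mnorm2_mscale t x : mnorm2 (mscale t x) = t ^ 2 * mnorm2 x.
Proof. unfold mnorm2, mscale; simpl. ring. Qed.

Lemma mscale1 x : mscale 1 x = x.
Proof. destruct x; unfold mscale; simpl; f_equal; ring. Qed.

Lemma mscale_mscale s t x : mscale s (mscale t x) = mscale (s * t) x.
Proof. unfold mscale; simpl; f_equal; ring. Qed.

Lemma mnorm_triangle x y : sqrt (mnorm2 (madd x y)) <= sqrt (mnorm2 x) + sqrt (mnorm2 y).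
Proof. unfold mnorm2, madd; simpl. apply sqrt_sum_sq4_triangle. Qed.

Lemma mdist_triangle x y z : mdist x z <= mdist x y + mdist y z.
Proof.
  unfold mdist. replace (msub x z) with (madd (msub x y) (msub y z)).
  - apply mnorm_triangle.
  - unfold msub, madd, mscale; simpl; f_equal; ring.
Qed.

Lemma mdist_sym x y : mdist x y = mdist y x.
Proof. unfold mdist, mnorm2, msub, madd, mscale; simpl. f_equal. ring. Qed.

Lemma mdist_xx x : mdist x x = 0.
Proof.
  unfold mdist, mnorm2, msub, madd, mscale; simpl.
  replace (_ + _) with 0 by ring. apply sqrt_0.
Qed.

Lemma mdist_ge0 x y : 0 <= mdist x y.
Proof. apply sqrt_positivity, mnorm2_ge0. Qed.

Lemma mdist_mscale s x y : mdist (mscale s x) (mscale s y) = Rabs s * mdist x y.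
Proof.
  unfold mdist. replace (mnorm2 (msub (mscale s x) (mscale s y))) with (s^2 * mnorm2 (msub x y))
    by (unfold mnorm2, msub, madd, mscale; simpl; ring).
  rewrite sqrt_mult_alt by apply pow2_ge_0. now rewrite <- pow2_abs, sqrt_pow2 by apply Rabs_pos.
Qed.

Lemma mdist_mscale_mscale s t x : mdist (mscale s x) (mscale t x) = Rabs (s - t) * sqrt (mnorm2 x).
Proof.
  unfold mdist. replace (mnorm2 (msub (mscale s x) (mscale t x))) with ((s-t)^2 * mnorm2 x)
    by (unfold mnorm2, msub, madd, mscale; simpl; ring).
  rewrite sqrt_mult_alt by apply pow2_ge_0. now rewrite <- pow2_abs, sqrt_pow2 by apply Rabs_pos.
Qed.

Definition mball (xi : M2) (r : R) (y : M2) : Prop := mdist xi y < r.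

Lemma mball_open xi r : mopen (mball xi r).
Proof.
  intros y Hy. exists (r - mdist xi y). split; [unfold mball in Hy; lra|].
  intros z Hz. pose proof (mdist_triangle xi y z). unfold mball. lra.
Qed.

(** * Conformal-anticonformal coordinates *)

(* [x = [[a, -b], [b, a]] + [[c, d], [d, -c]]] with [(a, b) = (conf1 x, conf2 x)]
   and [(c, d) = (anti1 x, anti2 x)]. *)
Definition conf1 x := (a11 x + a22 x) / 2.
Definition conf2 x := (a21 x - a12 x) / 2.
Definition anti1 x := (a11 x - a22 x) / 2.
Definition anti2 x := (a12 x + a21 x) / 2.
Definition conf_mod x := sqrt (conf1 x ^ 2 + conf2 x ^ 2).
Definition anti_mod x := sqrt (anti1 x ^ 2 + anti2 x ^ 2).

Definition sv_min x := Rabs (conf_mod x - anti_mod x).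
Definition sv_max x := conf_mod x + anti_mod x.

Lemma conf_mod_ge0 x : 0 <= conf_mod x.
Proof. apply sqrt_positivity, sum_sq2_ge0. Qed.

Lemma anti_mod_ge0 x : 0 <= anti_mod x.
Proof. apply sqrt_positivity, sum_sq2_ge0. Qed.

Lemma mnorm2_conf_anti x : mnorm2 x = 2 * (conf_mod x ^ 2 + anti_mod x ^ 2).
Proof.
  unfold conf_mod, anti_mod. rewrite !pow2_sqrt by apply sum_sq2_ge0.
  unfold mnorm2, conf1, conf2, anti1, anti2. field.
Qed.

Lemma mdet_conf_anti x : mdet x = conf_mod x ^ 2 - anti_mod x ^ 2.
Proof.
  unfold conf_mod, anti_mod. rewrite !pow2_sqrt by apply sum_sq2_ge0.
  unfold mdet, conf1, conf2, anti1, anti2. field.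
Qed.

Lemma singvals_iff x l1 l2 : singvals x l1 l2 <-> l1 = sv_min x /\ l2 = sv_max x.
Proof.
  pose proof (conf_mod_ge0 x). pose proof (anti_mod_ge0 x).
  unfold singvals, sv_min, sv_max. rewrite mnorm2_conf_anti, mdet_conf_anti.
  set (r := conf_mod x) in *. set (w := anti_mod x) in *.
  assert (sq_inj : forall a b, 0 <= a -> 0 <= b -> a ^ 2 = b ^ 2 -> a = b) by (intros; nra).
  destruct (Rle_dec w r).
  - rewrite (Rabs_right (r - w)), (Rabs_right (r ^ 2 - w ^ 2)) by nra. split.
    + intros (H1 & H2 & H3 & H4).
      assert (l1 + l2 = 2 * r) by (apply sq_inj; nra).
      assert (l2 - l1 = 2 * w) by (apply sq_inj; nra).
      lra.
    + intros [-> ->]. repeat split; try lra; ring.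
  - rewrite (Rabs_left1 (r - w)), (Rabs_left1 (r ^ 2 - w ^ 2)) by nra. split.
    + intros (H1 & H2 & H3 & H4).
      assert (l1 + l2 = 2 * w) by (apply sq_inj; nra).
      assert (l2 - l1 = 2 * r) by (apply sq_inj; nra).
      lra.
    + intros [-> ->]. repeat split; try lra; ring.
Qed.

Lemma sv_min_le_sv_max x : sv_min x <= sv_max x.
Proof.
  pose proof (conf_mod_ge0 x). pose proof (anti_mod_ge0 x).
  unfold sv_min, sv_max. apply Rabs_le. lra.
Qed.

Lemma sv_min_le_mnorm x : sv_min x <= sqrt (mnorm2 x).
Proof.
  assert (Hs : singvals x (sv_min x) (sv_max x)) by now apply singvals_iff.
  destruct Hs as (H0 & _ & Hn & _). apply le_sqrt_of_sq_le. rewrite <- Hn.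
  pose proof (pow2_ge_0 (sv_max x)). lra.
Qed.

Lemma conf_anti_mod_lipschitz x y :
  Rabs (conf_mod x - conf_mod y) + Rabs (anti_mod x - anti_mod y) <= mdist x y.
Proof.
  pose proof (sqrt_sum_sq2_reverse_triangle (conf1 x) (conf2 x) (conf1 y) (conf2 y)) as Hc.
  pose proof (sqrt_sum_sq2_reverse_triangle (anti1 x) (anti2 x) (anti1 y) (anti2 y)) as Ha.
  fold (conf_mod x) (conf_mod y) in Hc. fold (anti_mod x) (anti_mod y) in Ha.
  set (dc := (conf1 x - conf1 y) ^ 2 + (conf2 x - conf2 y) ^ 2) in *.
  set (da := (anti1 x - anti1 y) ^ 2 + (anti2 x - anti2 y) ^ 2) in *.
  assert (Hdc : 0 <= dc) by apply sum_sq2_ge0. assert (Hda : 0 <= da) by apply sum_sq2_ge0.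
  pose proof (sqrt_positivity dc Hdc). pose proof (sqrt_positivity da Hda).
  enough (sqrt dc + sqrt da <= mdist x y) by lra.
  unfold mdist. apply le_sqrt_of_sq_le.
  replace (mnorm2 (msub x y)) with (2 * (dc + da))
    by (unfold dc, da, mnorm2, msub, madd, mscale, conf1, conf2, anti1, anti2; simpl; field).
  rewrite <- (pow2_sqrt dc Hdc) at 2. rewrite <- (pow2_sqrt da Hda) at 2.
  pose proof (pow2_ge_0 (sqrt dc - sqrt da)). nra.
Qed.

Lemma sv_min_lipschitz x y : Rabs (sv_min x - sv_min y) <= mdist x y.
Proof.
  pose proof (conf_anti_mod_lipschitz x y). unfold sv_min.
  eapply Rle_trans; [apply Rabs_triang_inv2|].
  replace (conf_mod x - anti_mod x - (conf_mod y - anti_mod y))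
    with ((conf_mod x - conf_mod y) - (anti_mod x - anti_mod y)) by ring.
  eapply Rle_trans; [apply Rabs_triang|]. rewrite Rabs_Ropp. lra.
Qed.

Lemma sv_max_lipschitz x y : Rabs (sv_max x - sv_max y) <= mdist x y.
Proof.
  pose proof (conf_anti_mod_lipschitz x y). unfold sv_max.
  replace (conf_mod x + anti_mod x - (conf_mod y + anti_mod y))
    with ((conf_mod x - conf_mod y) + (anti_mod x - anti_mod y)) by ring.
  eapply Rle_trans; [apply Rabs_triang|]. lra.
Qed.

Lemma conf_mod_mscale t x : 0 <= t -> conf_mod (mscale t x) = t * conf_mod x.
Proof.
  intros Ht. unfold conf_mod.
  replace (conf1 (mscale t x) ^ 2 + conf2 (mscale t x) ^ 2) with (t ^ 2 * (conf1 x ^ 2 + conf2 x ^ 2))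
    by (unfold conf1, conf2, mscale; simpl; field).
  now rewrite sqrt_mult_alt, sqrt_pow2 by (apply pow2_ge_0 || assumption).
Qed.

Lemma anti_mod_mscale t x : 0 <= t -> anti_mod (mscale t x) = t * anti_mod x.
Proof.
  intros Ht. unfold anti_mod.
  replace (anti1 (mscale t x) ^ 2 + anti2 (mscale t x) ^ 2) with (t ^ 2 * (anti1 x ^ 2 + anti2 x ^ 2))
    by (unfold anti1, anti2, mscale; simpl; field).
  now rewrite sqrt_mult_alt, sqrt_pow2 by (apply pow2_ge_0 || assumption).
Qed.

Lemma sv_min_mscale t x : 0 <= t -> sv_min (mscale t x) = t * sv_min x.
Proof.
  intros Ht. unfold sv_min. rewrite conf_mod_mscale, anti_mod_mscale by assumption.
  rewrite <- Rmult_minus_distr_l, Rabs_mult. now rewrite (Rabs_pos_eq t).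
Qed.

Lemma sv_max_mscale t x : 0 <= t -> sv_max (mscale t x) = t * sv_max x.
Proof.
  intros Ht. unfold sv_max. rewrite conf_mod_mscale, anti_mod_mscale by assumption. ring.
Qed.

(** * Diagonal matrices in a rotated frame *)

(* Conformal part [(p + q) / 2] in the unit direction [u], anticonformal part
   [(p - q) / 2] in the unit direction [v]; for [u = v = (1, 0)] this is [diag(p, q)].
   Since [det = p q], changing only [p] or only [q] is a rank-one move. *)
Definition fdiag (u1 u2 v1 v2 p q : R) : M2 :=
  mkM2 ((p+q)/2*u1 + (p-q)/2*v1) ((p-q)/2*v2 - (p+q)/2*u2)
       ((p+q)/2*u2 + (p-q)/2*v2) ((p+q)/2*u1 - (p-q)/2*v1).

Section Frame.

Variables u1 u2 v1 v2 : R.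
Hypothesis unit_u : u1 ^ 2 + u2 ^ 2 = 1.
Hypothesis unit_v : v1 ^ 2 + v2 ^ 2 = 1.

Lemma fdiag_det p q : mdet (fdiag u1 u2 v1 v2 p q) = p * q.
Proof.
  unfold mdet, fdiag; simpl.
  transitivity (((p+q)/2)^2*(u1^2+u2^2) - ((p-q)/2)^2*(v1^2+v2^2)); [ring|].
  rewrite unit_u, unit_v. field.
Qed.

Lemma fdiag_mnorm2 p q : mnorm2 (fdiag u1 u2 v1 v2 p q) = p ^ 2 + q ^ 2.
Proof.
  unfold mnorm2, fdiag; simpl.
  transitivity (2*(((p+q)/2)^2*(u1^2+u2^2) + ((p-q)/2)^2*(v1^2+v2^2))); [ring|].
  rewrite unit_u, unit_v. field.
Qed.

Lemma fdiag_singvals p q : Rabs q <= Rabs p ->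
  singvals (fdiag u1 u2 v1 v2 p q) (Rabs q) (Rabs p).
Proof.
  intros Hqp. split; [apply Rabs_pos|]. split; [assumption|]. split.
  - rewrite fdiag_mnorm2, !pow2_abs. ring.
  - now rewrite fdiag_det, Rabs_mult, Rmult_comm.
Qed.

Lemma fdiag_rank_one dp dq : dp * dq = 0 -> (dp <> 0 \/ dq <> 0) ->
  rank_one (fdiag u1 u2 v1 v2 dp dq).
Proof.
  intros H0 H1. split.
  - intro E. assert (N : mnorm2 (fdiag u1 u2 v1 v2 dp dq) = 0)
      by (rewrite E; unfold mnorm2, mzero; simpl; ring).
    rewrite fdiag_mnorm2 in N. destruct H1; nra.
  - now rewrite fdiag_det.
Qed.

End Frame.

Lemma fdiag_sub u1 u2 v1 v2 p q p' q' :
  msub (fdiag u1 u2 v1 v2 p q) (fdiag u1 u2 v1 v2 p' q') = fdiag u1 u2 v1 v2 (p - p') (q - q').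
Proof. unfold msub, madd, mscale, fdiag; simpl. f_equal; field. Qed.

Lemma fdiag_comb u1 u2 v1 v2 s p q p' q' :
  madd (mscale s (fdiag u1 u2 v1 v2 p q)) (mscale (1 - s) (fdiag u1 u2 v1 v2 p' q'))
  = fdiag u1 u2 v1 v2 (s * p + (1 - s) * p') (s * q + (1 - s) * q').
Proof. unfold madd, mscale, fdiag; simpl. f_equal; field. Qed.

Lemma fdiag_mscale u1 u2 v1 v2 t p q :
  mscale t (fdiag u1 u2 v1 v2 p q) = fdiag u1 u2 v1 v2 (t * p) (t * q).
Proof. unfold mscale, fdiag; simpl. f_equal; field. Qed.

Lemma unit_direction a b : exists u1 u2, u1 ^ 2 + u2 ^ 2 = 1 /\
  sqrt (a ^ 2 + b ^ 2) * u1 = a /\ sqrt (a ^ 2 + b ^ 2) * u2 = b.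
Proof.
  destruct (Req_dec (sqrt (a ^ 2 + b ^ 2)) 0) as [H|H].
  - exists 1, 0. rewrite H. apply sqrt_eq_0 in H; [|apply sum_sq2_ge0].
    repeat split; nra.
  - exists (a / sqrt (a ^ 2 + b ^ 2)), (b / sqrt (a ^ 2 + b ^ 2)).
    split; [|split; field; exact H].
    transitivity ((a ^ 2 + b ^ 2) / sqrt (a ^ 2 + b ^ 2) ^ 2); [field; exact H|].
    rewrite pow2_sqrt by apply sum_sq2_ge0. field.
    intro H0. apply H. rewrite H0. apply sqrt_0.
Qed.

Lemma fdiag_decomposition x : exists u1 u2 v1 v2,
  u1 ^ 2 + u2 ^ 2 = 1 /\ v1 ^ 2 + v2 ^ 2 = 1 /\
  x = fdiag u1 u2 v1 v2 (sv_max x) (conf_mod x - anti_mod x).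
Proof.
  destruct (unit_direction (conf1 x) (conf2 x)) as (u1 & u2 & hu & e1 & e2).
  destruct (unit_direction (anti1 x) (anti2 x)) as (v1 & v2 & hv & e3 & e4).
  exists u1, u2, v1, v2. split; [exact hu|]. split; [exact hv|].
  fold (conf_mod x) in e1, e2. fold (anti_mod x) in e3, e4.
  unfold fdiag, sv_max.
  replace ((conf_mod x + anti_mod x + (conf_mod x - anti_mod x)) / 2) with (conf_mod x) by field.
  replace ((conf_mod x + anti_mod x - (conf_mod x - anti_mod x)) / 2) with (anti_mod x) by field.
  generalize dependent (conf_mod x). generalize dependent (anti_mod x).
  destruct x as [x11 x12 x21 x22]. unfold conf1, conf2, anti1, anti2; simpl.
  intros w e3 e4 r e1 e2. f_equal; lra.
Qed.

(** * Rank-one convex hulls *)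

Lemma rc_hull_compact_of_mem (C : M2 -> Prop) c : C c -> rc_hull_compact C c.
Proof. intros Hc f _ Hf. now apply Hf. Qed.

Lemma rc_hull_compact_rank_one_comb (C : M2 -> Prop) y z s :
  rc_hull_compact C y -> rc_hull_compact C z -> rank_one (msub y z) -> 0 <= s <= 1 ->
  rc_hull_compact C (madd (mscale s y) (mscale (1 - s) z)).
Proof.
  intros Hy Hz Hr Hs f Hf HC.
  pose proof (Hf y z Hr s Hs). pose proof (Hy f Hf HC). pose proof (Hz f Hf HC). nra.
Qed.

Definition mscale_set (t : R) (C : M2 -> Prop) (y : M2) : Prop :=
  exists c, C c /\ y = mscale t c.

Lemma rc_hull_compact_mscale (C : M2 -> Prop) t x : 0 < t -> rc_hull_compact C x ->
  rc_hull_compact (mscale_set t C) (mscale t x).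
Proof.
  intros Ht Hx f Hf HC.
  apply (Hx (fun y => f (mscale t y))).
  - intros y z [Hr0 Hrdet] s Hs.
    replace (mscale t (madd (mscale s y) (mscale (1 - s) z))) with
      (madd (mscale s (mscale t y)) (mscale (1 - s) (mscale t z)))
      by (unfold madd, mscale; simpl; f_equal; ring).
    apply Hf; [|assumption]. split.
    + intro E. apply Hr0. unfold msub, madd, mscale, mzero in *. simpl in *.
      injection E; intros. f_equal; apply (Rmult_eq_reg_l t); lra.
    + unfold mdet, msub, madd, mscale in *; simpl in *.
      transitivity (t ^ 2 * ((a11 y + -1 * a11 z) * (a22 y + -1 * a22 z) -
        (a12 y + -1 * a12 z) * (a21 y + -1 * a21 z))); [ring|]. rewrite Hrdet. ring.
  - intros c Hc. apply HC. now exists c.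
Qed.

Section FrameLaminates.

Variables (C : M2 -> Prop) (u1 u2 v1 v2 : R).
Hypothesis unit_u : u1 ^ 2 + u2 ^ 2 = 1.
Hypothesis unit_v : v1 ^ 2 + v2 ^ 2 = 1.

Let F := fdiag u1 u2 v1 v2.

Lemma rc_hull_fdiag_segment_q p q Q : 0 < Q -> Rabs q <= Q ->
  rc_hull_compact C (F p Q) -> rc_hull_compact C (F p (- Q)) -> rc_hull_compact C (F p q).
Proof.
  intros HQ Hq Hp Hm. assert (- Q <= q <= Q) by (revert Hq; unfold Rabs; destruct (Rcase_abs q); lra).
  set (s := (Q + q) / (2 * Q)).
  replace (F p q) with (madd (mscale s (F p Q)) (mscale (1 - s) (F p (- Q)))).
  - apply rc_hull_compact_rank_one_comb; [assumption|assumption| |].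
    + unfold F. rewrite fdiag_sub. apply fdiag_rank_one; [assumption|assumption|ring|right; lra].
    + unfold s. split; [apply Rmult_le_pos; [lra|left; apply Rinv_0_lt_compat; lra]|].
      apply Rmult_le_reg_r with (2 * Q); [lra|]. field_simplify; lra.
  - unfold F. rewrite fdiag_comb. unfold s. f_equal; field; lra.
Qed.

Lemma rc_hull_fdiag_segment_p p q P : 0 < P -> Rabs p <= P ->
  rc_hull_compact C (F P q) -> rc_hull_compact C (F (- P) q) -> rc_hull_compact C (F p q).
Proof.
  intros HP Hp Hpl Hm. assert (- P <= p <= P) by (revert Hp; unfold Rabs; destruct (Rcase_abs p); lra).
  set (s := (P + p) / (2 * P)).
  replace (F p q) with (madd (mscale s (F P q)) (mscale (1 - s) (F (- P) q))).
  - apply rc_hull_compact_rank_one_comb; [assumption|assumption| |].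
    + unfold F. rewrite fdiag_sub. apply fdiag_rank_one; [assumption|assumption|ring|left; lra].
    + unfold s. split; [apply Rmult_le_pos; [lra|left; apply Rinv_0_lt_compat; lra]|].
      apply Rmult_le_reg_r with (2 * P); [lra|]. field_simplify; lra.
  - unfold F. rewrite fdiag_comb. unfold s. f_equal; field; lra.
Qed.

Lemma rc_hull_fdiag_box p q P Q : 0 < P -> 0 < Q -> Rabs p <= P -> Rabs q <= Q ->
  (forall p' q', Rabs p' = P -> Rabs q' = Q -> C (F p' q')) ->
  rc_hull_compact C (F p q).
Proof.
  intros HP HQ Hp Hq Hvert.
  assert (HabsP : Rabs P = P /\ Rabs (- P) = P)
    by (rewrite Rabs_Ropp; split; apply Rabs_pos_eq; lra).
  assert (HabsQ : Rabs Q = Q /\ Rabs (- Q) = Q)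
    by (rewrite Rabs_Ropp; split; apply Rabs_pos_eq; lra).
  apply rc_hull_fdiag_segment_p with P; [assumption|assumption| |];
    apply rc_hull_fdiag_segment_q with Q; try assumption;
    apply rc_hull_compact_of_mem, Hvert; tauto.
Qed.

End FrameLaminates.

Definition sing_set (K : R * R -> Prop) (z : M2) : Prop :=
  exists l1 l2, singvals z l1 l2 /\ K (l1, l2).

Lemma sing_set_iff K z : sing_set K z <-> K (sv_min z, sv_max z).
Proof.
  split.
  - intros (l1 & l2 & Hs & HK). apply singvals_iff in Hs as [-> ->]. exact HK.
  - intros HK. exists (sv_min z), (sv_max z). split; [now apply singvals_iff | exact HK].
Qed.

Lemma mscale_sing_set_iff K t y : 0 < t ->
  mscale_set t (sing_set K) y <-> K (sv_min y / t, sv_max y / t).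
Proof.
  intros Ht. split.
  - intros (c & Hc & ->). apply sing_set_iff in Hc.
    rewrite sv_min_mscale, sv_max_mscale by lra.
    replace (t * sv_min c / t) with (sv_min c) by (field; lra).
    replace (t * sv_max c / t) with (sv_max c) by (field; lra). exact Hc.
  - intros HK. exists (mscale (/ t) y). split.
    + apply sing_set_iff. assert (0 < / t) by now apply Rinv_0_lt_compat.
      rewrite sv_min_mscale, sv_max_mscale by lra.
      now rewrite !(Rmult_comm (/ t)).
    + rewrite mscale_mscale, Rinv_r, mscale1 by lra. reflexivity.
Qed.

Lemma mscale_sing_set_compact K t : compact2 K -> 0 < t <= 1 ->
  mcompact (mscale_set t (sing_set K)).
Proof.
  intros [HKclosed [M HM]] Ht. split.
  - intros y Hy. rewrite mscale_sing_set_iff in Hy by lra.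
    destruct (HKclosed _ Hy) as (e & He & Hball).
    exists (t * e / 2). split; [nra|].
    intros y' Hd Hy'. rewrite mscale_sing_set_iff in Hy' by lra. revert Hy'. apply Hball.
    eapply Rle_lt_trans; [apply dist2_le_abs_sum|]. simpl.
    replace (sv_min y / t - sv_min y' / t) with ((sv_min y - sv_min y') / t) by (field; lra).
    replace (sv_max y / t - sv_max y' / t) with ((sv_max y - sv_max y') / t) by (field; lra).
    unfold Rdiv. rewrite !Rabs_mult, (Rabs_pos_eq (/ t))
      by (left; now apply Rinv_0_lt_compat).
    pose proof (sv_min_lipschitz y y'). pose proof (sv_max_lipschitz y y').
    apply Rmult_lt_reg_r with t; [lra|].
    rewrite Rmult_plus_distr_r, !Rmult_assoc, Rinv_l by lra. lra.
  - exists M. intros y (c & Hc & ->).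
    apply sing_set_iff, HM in Hc; simpl in Hc.
    assert (Hs : singvals c (sv_min c) (sv_max c)) by now apply singvals_iff.
    destruct Hs as (_ & _ & Hn & _).
    rewrite mnorm2_mscale. pose proof (mnorm2_ge0 c).
    assert (t ^ 2 <= 1) by nra. nra.
Qed.

(* The open set [U_(n+1)] of the in-approximation.  The radius [(1 - t) * sv_min c]
   keeps both singular values of its points strictly below those of [c]. *)
Definition approx_set (K : R * R -> Prop) (n : nat) (x : M2) : Prop :=
  exists c t, sing_set K c /\ 1 - / (INR n + 2) < t < 1 /\
    mdist x (mscale t c) < (1 - t) * sv_min c.

Lemma inv_INR_add2_bounds n : 0 < / (INR n + 2) <= / 2.
Proof.
  pose proof (pos_INR n). split.
  - apply Rinv_0_lt_compat; lra.
  - apply Rinv_le_contravar; lra.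
Qed.

Lemma approx_set_open K n : mopen (approx_set K n).
Proof.
  intros x (c & t & Hc & Ht & Hd).
  exists ((1 - t) * sv_min c - mdist x (mscale t c)). split; [lra|].
  intros y Hy. exists c, t. do 2 (split; [assumption|]).
  pose proof (mdist_triangle y x (mscale t c)). rewrite (mdist_sym y x) in *. lra.
Qed.

Lemma mscale_sing_set_sub_approx_set K n t y :
  (forall p, K p -> 0 < fst p) -> 1 - / (INR n + 2) < t < 1 ->
  mscale_set t (sing_set K) y -> approx_set K n y.
Proof.
  intros Hpos Ht (c & Hc & ->). exists c, t. do 2 (split; [assumption|]).
  apply sing_set_iff, Hpos in Hc; simpl in Hc.
  rewrite mdist_xx. nra.
Qed.

Lemma approx_set_sv_lt K n x : approx_set K n x ->
  exists c, sing_set K c /\ sv_min x < sv_min c /\ sv_max x < sv_max c.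
Proof.
  intros (c & t & Hc & Ht & Hd). exists c. split; [assumption|].
  pose proof (inv_INR_add2_bounds n).
  pose proof (sv_min_lipschitz x (mscale t c)) as Hmin.
  pose proof (sv_max_lipschitz x (mscale t c)) as Hmax.
  rewrite sv_min_mscale, sv_max_mscale in * by lra.
  pose proof (Rle_abs (sv_min x - t * sv_min c)). pose proof (Rle_abs (sv_max x - t * sv_max c)).
  pose proof (sv_min_le_sv_max c).
  split; nra.
Qed.

Lemma rc_hull_mscale_sing_set_of_sv_le K c t x :
  sing_set K c -> 0 < sv_min c -> 0 < t ->
  sv_min x <= t * sv_min c -> sv_max x <= t * sv_max c ->
  rc_hull_compact (mscale_set t (sing_set K)) x.
Proof.
  intros Hc Hc0 Ht Hmin Hmax.
  pose proof (sv_min_le_sv_max c).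
  assert (Habs_div : forall a, Rabs (a / t) = Rabs a / t)
    by (intros; unfold Rdiv; rewrite Rabs_mult, Rabs_inv, (Rabs_pos_eq t) by lra; reflexivity).
  destruct (fdiag_decomposition x) as (u1 & u2 & v1 & v2 & hu & hv & Ex). rewrite Ex.
  apply rc_hull_fdiag_box with (P := t * sv_max c) (Q := t * sv_min c);
    [assumption|assumption|nra|nra| |exact Hmin|].
  - rewrite Rabs_pos_eq; [assumption|].
    unfold sv_max. pose proof (conf_mod_ge0 x). pose proof (anti_mod_ge0 x). lra.
  - intros p q Hp Hq. exists (fdiag u1 u2 v1 v2 (p / t) (q / t)). split.
    + exists (Rabs (q / t)), (Rabs (p / t)). split.
      * apply fdiag_singvals; [assumption|assumption|].
        rewrite !Habs_div, Hp, Hq. apply Rmult_le_compat_r; [|nra].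
        left. now apply Rinv_0_lt_compat.
      * rewrite !Habs_div, Hp, Hq.
        replace (t * sv_min c / t) with (sv_min c) by (field; lra).
        replace (t * sv_max c / t) with (sv_max c) by (field; lra).
        now apply sing_set_iff.
    + rewrite fdiag_mscale. f_equal; field; lra.
Qed.

Lemma exists_scale_near_1 (a x1 l1 x2 l2 : R) : a < 1 -> 0 < l1 -> 0 < l2 ->
  x1 < l1 -> x2 < l2 -> exists t, a < t < 1 /\ x1 <= t * l1 /\ x2 <= t * l2.
Proof.
  intros Ha Hl1 Hl2 Hx1 Hx2.
  assert (Hr1 : x1 / l1 < 1) by (apply Rmult_lt_reg_r with l1; [lra|]; field_simplify; lra).
  assert (Hr2 : x2 / l2 < 1) by (apply Rmult_lt_reg_r with l2; [lra|]; field_simplify; lra).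
  set (m := Rmax a (Rmax (x1 / l1) (x2 / l2))).
  assert (Hm : m < 1) by (unfold m; repeat apply Rmax_lub_lt; assumption).
  pose proof (Rmax_l a (Rmax (x1 / l1) (x2 / l2))).
  pose proof (Rmax_r a (Rmax (x1 / l1) (x2 / l2))).
  pose proof (Rmax_l (x1 / l1) (x2 / l2)). pose proof (Rmax_r (x1 / l1) (x2 / l2)).
  exists ((m + 1) / 2). split; [unfold m in *; lra|].
  replace x1 with (x1 / l1 * l1) by (field; lra).
  replace x2 with (x2 / l2 * l2) by (field; lra).
  split; apply Rmult_le_compat_r; unfold m in *; lra.
Qed.

Lemma approx_set_rc_step K n x : compact2 K -> (forall p, K p -> 0 < fst p) ->
  approx_set K n x -> rc_hull_open (approx_set K (S n)) x.
Proof.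
  intros HK Hpos Hx.
  destruct (approx_set_sv_lt K n x Hx) as (c & Hc & Hmin & Hmax).
  assert (Hc0 : 0 < sv_min c) by (apply sing_set_iff, Hpos in Hc; exact Hc).
  pose proof (sv_min_le_sv_max c). pose proof (inv_INR_add2_bounds (S n)).
  destruct (exists_scale_near_1 (1 - / (INR (S n) + 2)) (sv_min x) (sv_min c)
              (sv_max x) (sv_max c)) as (t & Ht & Htmin & Htmax); try lra.
  exists (mscale_set t (sing_set K)). split; [|split].
  - apply mscale_sing_set_compact; [assumption|lra].
  - intros y. now apply mscale_sing_set_sub_approx_set.
  - apply rc_hull_mscale_sing_set_of_sv_le with c; try assumption; lra.
Qed.

Lemma approx_set_near K M n x : (forall p, K p -> fst p ^ 2 + snd p ^ 2 <= M) ->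
  approx_set K n x -> exists e, sing_set K e /\ mdist x e < 2 * sqrt M / (INR n + 2).
Proof.
  intros HM (c & t & Hc & Ht & Hd). exists c. split; [assumption|].
  pose proof (inv_INR_add2_bounds n).
  assert (Hnorm : sqrt (mnorm2 c) <= sqrt M).
  { apply sqrt_le_1_alt. apply sing_set_iff, HM in Hc; simpl in Hc.
    assert (Hs : singvals c (sv_min c) (sv_max c)) by now apply singvals_iff.
    destruct Hs as (_ & _ & <- & _). exact Hc. }
  pose proof (sv_min_le_mnorm c).
  pose proof (mdist_triangle x (mscale t c) c) as Htri.
  rewrite <- (mscale1 c) in Htri at 4.
  rewrite mdist_mscale_mscale, Rabs_left1 in Htri by lra.
  apply Rlt_le_trans with ((1 - t) * (2 * sqrt M)); [nra|].
  pose proof (sqrt_positivity (mnorm2 c) (mnorm2_ge0 c)).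
  unfold Rdiv. nra.
Qed.

Lemma approx_set_near_eventually K M : (forall p, K p -> fst p ^ 2 + snd p ^ 2 <= M) ->
  forall eps, 0 < eps -> exists N, forall n, (N <= n)%nat ->
    forall x, approx_set K n x -> exists e, sing_set K e /\ mdist x e < eps.
Proof.
  intros HM eps Heps.
  destruct (INR_archimed eps (2 * sqrt M) Heps) as [N HN].
  exists N. intros n Hn x Hx.
  destruct (approx_set_near K M n x HM Hx) as (e & He & Hd).
  exists e. split; [assumption|]. apply Rlt_le_trans with (1 := Hd).
  apply le_INR in Hn. pose proof (pos_INR N).
  apply Rmult_le_reg_r with (INR n + 2); [lra|]. field_simplify; nra.
Qed.

(* Since [t C]^rc = t C^rc, a ball around an interior point of [C^rc] lies in
   [(t C)^rc] once [t] is close enough to 1. *)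
Lemma mball_sub_rc_hull_mscale_set (C : M2 -> Prop) xi :
  minterior (rc_hull_compact C) xi ->
  exists r t, 0 < r /\ 1 / 2 < t < 1 /\
    forall x, mball xi r x -> rc_hull_compact (mscale_set t C) x.
Proof.
  intros (e & He & Hball).
  set (N := sqrt (mnorm2 xi)).
  assert (HN : 0 <= N) by apply sqrt_positivity, mnorm2_ge0.
  set (k := Rmin (1 / 3) (e / (3 * (N + 1)))).
  assert (Hk0 : 0 < k) by (apply Rmin_glb_lt; [lra|apply Rdiv_lt_0_compat; lra]).
  assert (Hk1 : k <= 1 / 3) by apply Rmin_l.
  assert (HkN : k * N <= e / 3).
  { assert (k * (3 * (N + 1)) <= e).
    { apply Rle_trans with (e / (3 * (N + 1)) * (3 * (N + 1))).
      - apply Rmult_le_compat_r; [lra|apply Rmin_r].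
      - right. field. lra. }
    nra. }
  exists (e / 4), (/ (1 + k)). split; [lra|split].
  - split.
    + apply Rmult_lt_reg_r with (1 + k); [lra|]. rewrite Rinv_l by lra. lra.
    + rewrite <- Rinv_1. apply Rinv_lt_contravar; lra.
  - intros x Hx. unfold mball in Hx.
    replace x with (mscale (/ (1 + k)) (mscale (1 + k) x))
      by (rewrite mscale_mscale, Rinv_l, mscale1 by lra; reflexivity).
    apply rc_hull_compact_mscale; [apply Rinv_0_lt_compat; lra|].
    apply Hball.
    pose proof (mdist_triangle xi (mscale (1 + k) xi) (mscale (1 + k) x)) as Htri.
    rewrite <- (mscale1 xi) in Htri at 2.
    rewrite mdist_mscale_mscale, mdist_mscale in Htri.
    rewrite (Rabs_left1 (1 - (1 + k))), (Rabs_pos_eq (1 + k)) in Htri by lra.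
    fold N in Htri. pose proof (mdist_ge0 xi x). nra.
Qed.

Theorem theorem4p8 (K : R * R -> Prop) (xi : M2) :
  compact2 K ->
  (forall p, K p -> 0 < fst p /\ fst p <= snd p) ->
  minterior (rc_hull_compact
               (fun z => exists l1 l2, singvals z l1 l2 /\ K (l1, l2))) xi ->
  exists U : nat -> M2 -> Prop,
    in_approximation U (fun z => exists l1 l2, singvals z l1 l2 /\ K (l1, l2)) /\
    U O xi.
Proof.
  intros HK Hpos Hxi.
  assert (Hpos1 : forall p, K p -> 0 < fst p) by (intros p Hp; apply Hpos, Hp).
  destruct (mball_sub_rc_hull_mscale_set (sing_set K) xi Hxi) as (r & t & Hr & Ht & Hball).
  exists (fun i => match i with O => mball xi r | S n => approx_set K n end).
  split; [split; [|split]|].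
  - intros [|n]; [apply mball_open | apply approx_set_open].
  - intros [|n] x Hx.
    + exists (mscale_set t (sing_set K)). split; [|split].
      * apply mscale_sing_set_compact; [assumption|lra].
      * intros y. apply mscale_sing_set_sub_approx_set; [assumption|simpl; lra].
      * now apply Hball.
    + now apply approx_set_rc_step.
  - intros eps Heps. destruct HK as [_ [M HM]].
    destruct (approx_set_near_eventually K M HM eps Heps) as [N HN].
    exists (S N). intros [|n] Hn; [lia|]. apply HN. lia.
  - unfold mball. rewrite mdist_xx. exact Hr.
Qed.
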